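(* Let $\Omega$, $\mathcal{R}$, $\overline{C}$ be as in the context, with $\Omega$ nonempty and bounded and $\Omega\cap\mathcal{R}\ne\emptyset$. Define the set-valued map $\Gamma:\mathbb{R}\rightrightarrows\mathcal{S}^q$ by $\Gamma(w):=\{Y\in\Omega : \|Y\|_*-\|Y\|_2=w\}$, and suppose $\Gamma$ is calm at $0$ for each $Y\in\Gamma(0)$. Then there exists $\bar\rho>0$ such that for every $\rho>\bar\rho$: $Y^*$ is an optimal solution of $\min\{\langle\overline{C},Y\rangle : Y\in\Omega\cap\mathcal{R}\}$ if and only if $Y^*$ is an optimal solution of $$\min\{\,f_\rho(Y):=\langle\overline{C},Y\rangle+\rho(\|Y\|_*-\|Y\|_2) : Y\in\Omega\}.$$
   Context: $\mathcal{S}^q$ is the space of real symmetric $q\times q$ matrices with trace inner product and Frobenius norm; $\mathcal{S}^q_+$ the positive semidefinite cone; $\mathcal{N}^q$ the entrywise nonnegative matrices in $\mathcal{S}^q$. Given $\overline{C}\in\mathcal{S}^q$, a linear map $\mathcal{A}:\mathcal{S}^q\to\mathbb{R}^m$ and $b\in\mathbb{R}^m$, $\Omega:=\{Y\in\mathcal{S}^q_+\cap\mathcal{N}^q : \mathcal{A}(Y)=b\}$ and $\mathcal{R}:=\{Y\in\mathcal{S}^q:\operatorname{rank}(Y)\le1\}$. $\|Y\|_*$ is the nuclear norm (sum of singular values) and $\|Y\|_2$ the spectral norm (largest singular value). A set-valued map $\Psi:\mathcal{X}\rightrightarrows\mathcal{Z}$ between Euclidean spaces is calm at $\bar x$ for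 $\bar z\in\Psi(\bar x)$ if there exist $\alpha>0$ and neighborhoods $\mathcal{U}$ of $\bar x$, $\mathcal{V}$ of $\bar z$ with $\Psi(x)\cap\mathcal{V}\subseteq\Psi(\bar x)+\alpha\|x-\bar x\|\mathbb{B}$ for all $x\in\mathcal{U}$, where $\mathbb{B}$ is the closed unit ball. *)

From Stdlib Require Import Reals ClassicalEpsilon.
From mathcomp Require Import all_boot.
Set Implicit Arguments. Unset Strict Implicit. Unset Printing Implicit Defensive.
Open Scope R_scope.

Definition mat (q : nat) := 'I_q -> 'I_q -> R.
Definition vec (q : nat) := 'I_q -> R.

Definition sumI (q : nat) (F : 'I_q -> R) : R := \big[Rplus/R0]_(i < q) F i.
Definition maxI (q : nat) (F : 'I_q -> R) : R := \big[Rmax/R0]_(i < q) F i.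

Definition madd q (A B : mat q) : mat q := fun i j => A i j + B i j.
Definition mopp q (A : mat q) : mat q := fun i j => - A i j.
Definition mscale q (a : R) (A : mat q) : mat q := fun i j => a * A i j.

Definition is_sym q (A : mat q) : Prop := forall i j, A i j = A j i.

(* trace inner product <A,B> = tr(A^T B) = sum_{i,j} A_ij B_ij *)
Definition inner q (A B : mat q) : R := sumI (fun i => sumI (fun j => A i j * B i j)).
Definition frob q (A : mat q) : R := sqrt (inner A A).

Definition psd q (A : mat q) : Prop :=
  is_sym A /\ forall x : vec q, 0 <= sumI (fun i => sumI (fun j => x i * A i j * x j)).
Definition nonneg_mat q (A : mat q) : Prop := forall i j, 0 <= A i j.

(* rank(Y) <= 1: the column space of Y is contained in the span of one vector *)
Definition rank_le1 q (Y : mat q) : Prop :=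
  exists u : vec q, forall j, exists c : R, forall i, Y i j = c * u i.

Definition orthogonal q (U : mat q) : Prop :=
  forall i j, sumI (fun k => U k i * U k j) = (if i == j then 1 else 0).

Definition svd q (Y U V : mat q) (d : vec q) : Prop :=
  orthogonal U /\ orthogonal V /\ (forall k, 0 <= d k) /\
  forall i j, Y i j = sumI (fun k => U i k * d k * V j k).

Definition nuclear_norm q (Y : mat q) : R :=
  epsilon (inhabits R0)
    (fun s => exists U V d, svd Y U V d /\ s = sumI d).
Definition spectral_norm q (Y : mat q) : R :=
  epsilon (inhabits R0)
    (fun s => exists U V d, svd Y U V d /\ s = maxI d).

Definition linear_on_sym q m (Amap : mat q -> vec m) : Prop :=
  forall (a c : R) (Y Z : mat q), is_sym Y -> is_sym Z ->
    forall k, Amap (madd (mscale a Y) (mscale c Z)) k = a * Amap Y k + c * Amap Z k.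

Definition Omega q m (Amap : mat q -> vec m) (b : vec m) (Y : mat q) : Prop :=
  psd Y /\ nonneg_mat Y /\ forall k, Amap Y k = b k.

(* Calmness of Psi : R =>> S^q at xbar for zbar (neighbourhoods taken as balls) *)
Definition calm q (Psi : R -> mat q -> Prop) (xbar : R) (zbar : mat q) : Prop :=
  exists alpha eps1 eps2, 0 < alpha /\ 0 < eps1 /\ 0 < eps2 /\
    forall (x : R) (z : mat q), Rabs (x - xbar) <= eps1 ->
      frob (madd z (mopp zbar)) <= eps2 -> Psi x z ->
      exists z', Psi xbar z' /\ frob (madd z (mopp z')) <= alpha * Rabs (x - xbar).

Definition Gamma q m (Amap : mat q -> vec m) (b : vec m) (w : R) (Y : mat q) : Prop :=
  Omega Amap b Y /\ nuclear_norm Y - spectral_norm Y = w.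

Definition is_argmin q (S : mat q -> Prop) (f : mat q -> R) (Ystar : mat q) : Prop :=
  S Ystar /\ forall Y, S Y -> f Ystar <= f Y.

(* For Y in Omega (a set of PSD matrices) the rank gap
     gap(Y) = ||Y||_* - ||Y||_2 = sum of singular values - largest one
   is nonnegative and vanishes exactly on the matrices of rank <= 1, so the
   constrained problem is  min { <C,Y> : Y in Omega, gap(Y) = 0 }.  A variational proof of the spectral theorem gives an
      SVD Y = U diag(d) U^T of every PSD matrix; for any SVD the largest
      singular value is max_{|x|,|y|<=1} x^T Y y (hence independent of the
      decomposition and 1-Lipschitz in Frobenius norm) and for PSD Y the sum
      of singular values is the trace.  So on PSD matrices gap is continuous,
      nonnegative, and zero iff at most one singular value is nonzero, i.e.
      iff rank <= 1.
   2. Error bound.  Omega is closed and bounded; by sequential compactness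
      (Bolzano-Weierstrass) and calmness of Gamma at each point of Gamma(0)
      there is alpha > 0 with dist(Y, Gamma(0)) <= alpha gap(Y) on Omega.
   3. Exact penalty.  Y |-> <C,Y> is K-Lipschitz (K = sum |C_ij|), so an
      abstract exact-penalty argument works for every rho > K alpha. *)
From Stdlib Require Import Reals Lra Psatz ClassicalEpsilon FunctionalExtensionality.
From mathcomp Require Import all_boot ssralg matrix mxalgebra.
From mathcomp Require Import Rstruct.
Set Implicit Arguments. Unset Strict Implicit. Unset Printing Implicit Defensive.
Local Open Scope R_scope.

Section Sums.
Variable q : nat.
Implicit Types F G : 'I_q -> R.

Lemma sumI_ext F G : (forall i, F i = G i) -> sumI F = sumI G.
Proof. by move=> h; apply: eq_bigr => i _; exact: h. Qed.

Lemma sumI_add F G : sumI (fun i => F i + G i) = sumI F + sumI G.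
Proof. by rewrite /sumI big_split. Qed.

Lemma sumI_scal c F : sumI (fun i => c * F i) = c * sumI F.
Proof.
rewrite /sumI; apply: esym; apply: (big_morph (fun x => c * x)).
- by move=> x y; ring.
- by ring.
Qed.

Lemma sumI_scalr c F : sumI (fun i => F i * c) = sumI F * c.
Proof. rewrite Rmult_comm -sumI_scal; apply: sumI_ext => i; ring. Qed.

Lemma sumI_0 : sumI (fun _ : 'I_q => 0) = 0.
Proof. by rewrite /sumI big1. Qed.

Lemma sumI_opp F : sumI (fun i => - F i) = - sumI F.
Proof.
have -> : - sumI F = (-1) * sumI F by ring.
rewrite -sumI_scal; apply: sumI_ext => i; ring.
Qed.

Lemma sumI_sub F G : sumI (fun i => F i - G i) = sumI F - sumI G.
Proof. rewrite /Rminus -sumI_opp -sumI_add; apply: sumI_ext => i; ring. Qed.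

Lemma sumI_le F G : (forall i, F i <= G i) -> sumI F <= sumI G.
Proof.
move=> h; rewrite /sumI; apply: (big_ind2 (fun x y => x <= y)).
- lra.
- move=> *; lra.
- by move=> i _; exact: h.
Qed.

Lemma sumI_nonneg F : (forall i, 0 <= F i) -> 0 <= sumI F.
Proof. move=> h; rewrite -sumI_0; exact: sumI_le. Qed.

Lemma sumI_swap (F : 'I_q -> 'I_q -> R) :
  sumI (fun i => sumI (fun j => F i j)) = sumI (fun j => sumI (fun i => F i j)).
Proof. by rewrite /sumI exchange_big. Qed.

Lemma sumI_mul F G : sumI F * sumI G = sumI (fun i => sumI (fun j => F i * G j)).
Proof. rewrite -sumI_scalr; apply: sumI_ext => i; rewrite -sumI_scal //. Qed.

Lemma sumI_abs F : Rabs (sumI F) <= sumI (fun i => Rabs (F i)).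
Proof.
apply: Rabs_le; split.
- rewrite -sumI_opp; apply: sumI_le => i.
  have := Rle_abs (- F i); rewrite Rabs_Ropp; lra.
- apply: sumI_le => i; exact: Rle_abs.
Qed.

Lemma sumI_split F l : sumI F = F l + sumI (fun k => if k == l then 0 else F k).
Proof.
rewrite /sumI (bigD1 l) //=; congr (_ + _).
rewrite [in RHS](bigD1 l) //= eqxx Rplus_0_l.
by apply: eq_bigr => i /negbTE ->.
Qed.

Lemma sumI_ge_term F l : (forall i, 0 <= F i) -> F l <= sumI F.
Proof.
move=> h; rewrite (sumI_split _ l).
have : 0 <= sumI (fun k => if k == l then 0 else F k).
  by apply: sumI_nonneg => k; case: (k == l); [lra | exact: h].
lra.
Qed.

Lemma sumI_delta F l : sumI (fun k => (if k == l then 1 else 0) * F k) = F l.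
Proof.
rewrite (sumI_split _ l) eqxx Rmult_1_l.
rewrite (sumI_ext (G := fun _ => 0)) ?sumI_0; first ring.
by move=> k; case: (k == l) => //; ring.
Qed.

Lemma sumI_delta_r F l : sumI (fun k => F k * (if l == k then 1 else 0)) = F l.
Proof. rewrite -(sumI_delta F l); apply: sumI_ext => k; rewrite eq_sym; ring. Qed.

Lemma sumI_zero_nonneg F : (forall i, 0 <= F i) -> sumI F = 0 -> forall i, F i = 0.
Proof.
move=> h hs i; have := sumI_ge_term i h; have := h i; lra.
Qed.

Lemma sumI_cv (F : nat -> 'I_q -> R) L :
  (forall i, Un_cv (fun n => F n i) (L i)) -> Un_cv (fun n => sumI (F n)) (sumI L).
Proof.
move=> h; rewrite /sumI; elim: (index_enum _) => [|i r IH].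
- move=> e he; exists 0%nat => n _; rewrite /R_dist !big_nil Rminus_diag Rabs_R0 //.
- rewrite big_cons (_ : (fun n => _) = fun n => F n i + \big[Rplus/0]_(j <- r) F n j).
    exact: CV_plus.
  by apply: functional_extensionality => n; rewrite big_cons.
Qed.

End Sums.

Definition dot q (x y : vec q) : R := sumI (fun i => x i * y i).
Definition mv q (A : mat q) (x : vec q) : vec q := fun i => sumI (fun j => A i j * x j).
Definition bil q (A : mat q) (x y : vec q) : R :=
  sumI (fun i => sumI (fun j => x i * A i j * y j)).
Definition colv q (U : mat q) (k : 'I_q) : vec q := fun i => U i k.

Section Vectors.
Variable q : nat.
Implicit Types x y z : vec q.
Implicit Types A W : mat q.

Lemma dot_comm x y : dot x y = dot y x.
Proof. apply: sumI_ext => i; ring. Qed.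

Lemma dot_nonneg x : 0 <= dot x x.
Proof. apply: sumI_nonneg => i; nra. Qed.

Lemma dot_zero x : dot x x = 0 -> forall i, x i = 0.
Proof.
move=> h i; have := @sumI_zero_nonneg _ (fun i => x i * x i) _ h i.
move=> /(_ (fun i => ltac:(nra))) ?; nra.
Qed.

Lemma dot_pos x j : x j <> 0 -> 0 < dot x x.
Proof.
move=> hj; have := @sumI_ge_term _ (fun i => x i * x i) j (fun i => ltac:(nra)).
have : 0 < x j * x j by have := Rsqr_pos_lt _ hj; rewrite /Rsqr.
rewrite /dot; lra.
Qed.

Lemma dot_lin a b x y z :
  dot (fun i => a * x i + b * y i) z = a * dot x z + b * dot y z.
Proof. rewrite /dot -!sumI_scal -sumI_add; apply: sumI_ext => i; ring. Qed.

Lemma dot_scal c x y : dot (fun i => c * x i) y = c * dot x y.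
Proof. rewrite /dot -sumI_scal; apply: sumI_ext => i; ring. Qed.

Lemma dot_zero_l x : dot (fun _ => 0) x = 0.
Proof. rewrite /dot (sumI_ext (G := fun _ => 0)) ?sumI_0 // => i; ring. Qed.

Lemma unit_coord_bound x i : dot x x = 1 -> Rabs (x i) <= 1.
Proof.
move=> hx; have := @sumI_ge_term _ (fun i => x i * x i) i (fun i => ltac:(nra)).
rewrite -/(dot x x) hx => h.
rewrite -[1]Rabs_R1; apply: Rsqr_le_abs_0; rewrite /Rsqr; lra.
Qed.

Lemma cauchy_schwarz x y : dot x y * dot x y <= dot x x * dot y y.
Proof.
have hx := dot_nonneg x.
case: (Req_dec (dot x x) 0) => hxx.
- have -> : dot x y = 0.
    rewrite /dot (sumI_ext (G := fun _ => 0)) ?sumI_0 // => i.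
    rewrite (dot_zero hxx); ring.
  rewrite hxx; lra.
- set t := dot x y / dot x x.
  have := dot_nonneg (fun i => y i - t * x i).
  have -> : dot (fun i => y i - t * x i) (fun i => y i - t * x i) =
            dot y y - 2 * t * dot x y + t * t * dot x x.
    rewrite /dot -!sumI_scal -sumI_sub -sumI_add; apply: sumI_ext => i; ring.
  have -> : dot y y - 2 * t * dot x y + t * t * dot x x =
            (dot x x * dot y y - dot x y * dot x y) / dot x x.
    by rewrite /t; field.
  move=> h; have hxp : 0 < dot x x by lra.
  have := Rmult_le_compat_l _ _ _ (Rlt_le _ _ hxp) h.
  rewrite Rmult_0_r; have -> : dot x x * ((dot x x * dot y y - dot x y * dot x y) / dot x x)
      = dot x x * dot y y - dot x y * dot x y by field.
  lra.
Qed.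

Lemma bil_dot A x y : bil A x y = dot x (mv A y).
Proof.
rewrite /bil /dot /mv; apply: sumI_ext => i; rewrite -sumI_scal.
apply: sumI_ext => j; ring.
Qed.

Lemma mv_sym A x y : is_sym A -> dot (mv A x) y = dot x (mv A y).
Proof.
move=> hA; rewrite /dot /mv.
transitivity (sumI (fun i => sumI (fun j => A i j * x j * y i))).
  apply: sumI_ext => i; rewrite -sumI_scalr; apply: sumI_ext => j; ring.
rewrite sumI_swap; apply: sumI_ext => j; rewrite -sumI_scal.
apply: sumI_ext => i; rewrite hA; ring.
Qed.

Lemma bil_sym A x y : is_sym A -> bil A x y = bil A y x.
Proof. by move=> hA; rewrite !bil_dot -mv_sym // dot_comm. Qed.

Lemma bil_lin_l A a b x y z :
  bil A (fun i => a * x i + b * y i) z = a * bil A x z + b * bil A y z.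
Proof.
rewrite /bil -!sumI_scal -sumI_add; apply: sumI_ext => i.
rewrite -!sumI_scal -sumI_add; apply: sumI_ext => j; ring.
Qed.

Lemma bil_lin_r A a b x y z :
  bil A x (fun i => a * y i + b * z i) = a * bil A x y + b * bil A x z.
Proof.
rewrite /bil -!sumI_scal -sumI_add; apply: sumI_ext => i.
rewrite -!sumI_scal -sumI_add; apply: sumI_ext => j; ring.
Qed.

Lemma bil_scal A c x : bil A (fun i => c * x i) (fun i => c * x i) = c * c * bil A x x.
Proof.
rewrite /bil -sumI_scal; apply: sumI_ext => i; rewrite -sumI_scal.
apply: sumI_ext => j; ring.
Qed.

Lemma bil_zero_l A y : bil A (fun _ => 0) y = 0.
Proof. by rewrite bil_dot dot_zero_l. Qed.

Lemma bil_frob_bound W x y : bil W x y * bil W x y <= inner W W * dot x x * dot y y.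
Proof.
rewrite bil_dot.
have h1 := cauchy_schwarz x (mv W y).
have h2 : dot (mv W y) (mv W y) <= inner W W * dot y y.
  rewrite /inner -sumI_scalr; apply: sumI_le => i.
  exact: (cauchy_schwarz (fun j => W i j) y).
have := dot_nonneg x; have := dot_nonneg (mv W y); nra.
Qed.

End Vectors.

(* By finite
   dimensionality (U^T U = I implies U U^T = I) the rows are orthonormal too,
   which yields Parseval's identity for the column basis. *)
Section Orthogonal.
Variable q : nat.
Implicit Types U : mat q.

Lemma orth_col U k l : orthogonal U ->
  dot (colv U k) (colv U l) = if k == l then 1 else 0.
Proof. by move=> hU; exact: hU. Qed.

Lemma orthogonal_rows U : orthogonal U ->
  forall i j, sumI (fun k => U i k * U j k) = (if i == j then 1 else 0).
Proof.
move=> hU.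
pose M : 'M[R]_q := (\matrix_(i, j) U i j)%R.
have hMM : (M^T *m M = 1%:M)%R.
  apply/matrixP => i j; rewrite !mxE.
  transitivity (sumI (fun k => U k i * U k j)).
    by apply: eq_bigr => k _; rewrite !mxE.
  by rewrite hU; case: (i == j).
move=> i j; move/matrixP: (mulmx1C hMM) => /(_ i j); rewrite !mxE => h.
transitivity ((i == j)%:R : R)%R; last by case: (i == j).
rewrite -h; by apply: eq_bigr => k _; rewrite !mxE.
Qed.

Lemma parseval U x : orthogonal U ->
  sumI (fun k => dot x (colv U k) * dot x (colv U k)) = dot x x.
Proof.
move=> hU; have hrows := orthogonal_rows hU.
transitivity (sumI (fun k => sumI (fun i => sumI (fun j => x i * x j * (U i k * U j k))))).
  apply: sumI_ext => k; rewrite /dot sumI_mul; apply: sumI_ext => i;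
  apply: sumI_ext => j; rewrite /colv; ring.
rewrite sumI_swap; apply: sumI_ext => i; rewrite sumI_swap.
transitivity (sumI (fun j => x i * x j * (if i == j then 1 else 0))).
  by apply: sumI_ext => j; rewrite -hrows sumI_scal.
exact: (sumI_delta_r (fun j => x i * x j)).
Qed.

End Orthogonal.

Lemma exists_orthogonal_vector q k (u : nat -> vec q) : (k < q)%nat ->
  exists v : vec q, (forall i, (i < k)%nat -> dot v (u i) = 0) /\ exists j, v j <> 0.
Proof.
move=> hk.
pose M : 'M[R]_(k, q) := (\matrix_(i, j) u (nat_of_ord i) j)%R.
pose K := kermx (M^T).
have hK : (K *m M^T = 0)%R by exact: mulmx_ker.
have hK0 : K != 0%R.
  rewrite -mxrank_eq0 mxrank_ker subn_eq0 -ltnNge.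
  by apply: leq_ltn_trans hk; rewrite mxrank_tr rank_leq_row.
have [i [j hij]] : exists i j, K i j <> 0.
  apply: Classical_Prop.NNPP => hn; move/eqP: hK0; apply; apply/matrixP => i j.
  rewrite [RHS]mxE; apply: Classical_Prop.NNPP => hij; apply: hn; exists i, j; exact hij.
exists (fun j => K i j); split; last by exists j.
move=> l hl; move/matrixP: hK => /(_ i (Ordinal hl)); rewrite !mxE => h.
etransitivity; last exact: h.
by apply: eq_bigr => c _; rewrite !mxE.
Qed.

(* Subsequences and sequential compactness of bounded families in R^T,
   T finite (Bolzano-Weierstrass, extracted one coordinate at a time). *)
Section Sequences.

Definition incr (phi : nat -> nat) : Prop := forall n, (phi n < phi n.+1)%nat.

Lemma incr_ge phi : incr phi -> forall n, (n <= phi n)%nat.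
Proof. by move=> h; elim => [//|n IH]; exact: leq_ltn_trans IH (h n). Qed.

Lemma incr_mono phi : incr phi -> forall m n, (m < n)%nat -> (phi m < phi n)%nat.
Proof.
move=> h m; elim => [//|n IH]; rewrite ltnS leq_eqVlt => /orP [/eqP -> | hmn].
- exact: h.
- exact: ltn_trans (IH hmn) (h n).
Qed.

Lemma incr_comp phi psi : incr phi -> incr psi -> incr (fun n => phi (psi n)).
Proof. by move=> h1 h2 n; apply: incr_mono => //; exact: h2. Qed.

Lemma cv_subseq u l phi : incr phi -> Un_cv u l -> Un_cv (fun n => u (phi n)) l.
Proof.
move=> hp hu e he; have [N hN] := hu e he; exists N => n hn.
apply: hN; apply/leP; apply: leq_trans (incr_ge hp n); exact/leP.
Qed.

Lemma cv_const c : Un_cv (fun _ => c) c.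
Proof. move=> e he; exists 0%nat => n _; rewrite /R_dist Rminus_diag Rabs_R0 //. Qed.

Lemma inv_succ_small e : 0 < e -> exists N : nat, forall n, (N <= n)%nat -> / (INR n + 1) < e.
Proof.
move=> he; have [N hN] := INR_archimed e 1 he.
exists N => n hn.
have hNn : INR N <= INR n by apply: le_INR; exact/leP.
have hpos : 0 < INR n + 1 by have := pos_INR n; lra.
apply: (Rmult_lt_reg_l (INR n + 1)) => //; rewrite Rinv_r; [|lra].
nra.
Qed.

Lemma inv_succ_cv0 : Un_cv (fun n => / (INR n + 1)) 0.
Proof.
move=> e he; have [N hN] := inv_succ_small he; exists N => n hn.
have hpos : 0 < / (INR n + 1) by apply: Rinv_0_lt_compat; have := pos_INR n; lra.
rewrite /R_dist Rminus_0_r Rabs_pos_eq; [exact/hN/leP | lra].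
Qed.

Lemma scaled_bounded_cv0 (u : nat -> R) K :
  (forall n, 0 <= u n) -> (forall n, (INR n + 1) * u n <= K) -> Un_cv u 0.
Proof.
move=> hu hK e he.
have hK0 : 0 <= K by have := hK 0%nat; have := hu 0%nat; rewrite /= ; nra.
have [N hN] := inv_succ_small (Rdiv_lt_0_compat _ _ he (Rle_lt_0_plus_1 _ hK0)).
exists N => n hn; rewrite /R_dist Rminus_0_r Rabs_pos_eq //.
have hP : 0 < INR n + 1 by have := pos_INR n; lra.
have h1 : / (INR n + 1) < e / (K + 1) by exact/hN/leP.
have h2 : K + 1 < (INR n + 1) * e.
  have hK1 : 0 < K + 1 by lra.
  have := Rmult_lt_compat_l ((INR n + 1) * (K + 1)) _ _ (Rmult_lt_0_compat _ _ hP hK1) h1.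
  have -> : (INR n + 1) * (K + 1) * / (INR n + 1) = K + 1 by field; lra.
  have -> : (INR n + 1) * (K + 1) * (e / (K + 1)) = (INR n + 1) * e by field; lra.
  done.
have := hK n; nra.
Qed.

Lemma bounded_cv_subseq (u : nat -> R) M : (forall n, Rabs (u n) <= M) ->
  exists phi, incr phi /\ exists l, Un_cv (fun n => u (phi n)) l.
Proof.
move=> hM.
have [l hl] : exists l, ValAdh u l.
  apply: (Bolzano_Weierstrass u (fun c => - M <= c <= M)); first exact: compact_P3.
  move=> n; have := hM n; have := Rle_abs (u n); have := Rle_abs (- u n).
  rewrite Rabs_Ropp; lra.
have hnear : forall N k, exists p, (N <= p)%nat /\ Rabs (u p - l) < / (INR k + 1).
  move=> N k.
  have hk : 0 < / (INR k + 1) by apply: Rinv_0_lt_compat; have := pos_INR k; lra.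
  have [p [hp1 hp2]] := hl (disc l (mkposreal _ hk)) N
     (ex_intro _ (mkposreal _ hk) (fun x hx => hx)).
  by exists p; split; [exact/leP | exact: hp2].
have [sel hsel] := choice (fun Nk : nat * nat => fun p =>
  (Nk.1 <= p)%nat /\ Rabs (u p - l) < / (INR Nk.2 + 1)) (fun Nk => hnear Nk.1 Nk.2).
pose fix phi n := match n with 0 => sel (0, 0)%nat | S m => sel ((phi m).+1, n) end.
have hphi : forall n, Rabs (u (phi n) - l) < / (INR n + 1).
  by case => [|n]; exact: (proj2 (hsel _)).
exists phi; split; first by move=> n /=; exact: (proj1 (hsel ((phi n).+1, n.+1))).
exists l => e he; have [N hN] := inv_succ_cv0 he.
exists N => n hn; apply: Rlt_trans (hphi n) _.
have := hN n hn; rewrite /R_dist Rminus_0_r => h; exact: Rle_lt_trans (Rle_abs _) h.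
Qed.

Lemma bounded_fin_cv_subseq (T : finType) (s : nat -> T -> R) M :
  (forall n t, Rabs (s n t) <= M) ->
  exists phi, incr phi /\ exists l : T -> R, forall t, Un_cv (fun n => s (phi n) t) (l t).
Proof.
move=> hM.
suff : forall r : seq T, exists phi, incr phi /\ exists l : T -> R,
    forall t, t \in r -> Un_cv (fun n => s (phi n) t) (l t).
  move=> /(_ (enum T)) [phi [hp [l hl]]]; exists phi; split => //; exists l => t.
  by apply: hl; rewrite mem_enum.
elim => [|t0 r [phi [hp [l hl]]]].
- by exists id; split => //; exists (fun _ => 0).
- have [psi [hpsi [l0 hl0]]] := @bounded_cv_subseq (fun n => s (phi n) t0) M (fun n => hM _ t0).
  exists (fun n => phi (psi n)); split; first exact: incr_comp.
  exists (fun t => if t == t0 then l0 else l t) => t.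
  rewrite in_cons; case: eqP => [-> _ | _ /= ht]; first exact: hl0.
  exact: (cv_subseq (u := fun n => s (phi n) t)) (hl t ht).
Qed.

Lemma sup_approx (T : Type) (P : T -> Prop) (g : T -> R) B :
  (exists x, P x) -> (forall x, P x -> g x <= B) ->
  exists m, (forall x, P x -> g x <= m) /\
    forall n : nat, exists x, P x /\ m - / (INR n + 1) < g x.
Proof.
move=> [x0 hx0] hB.
pose E r := exists x, P x /\ r = g x.
have hbound : bound E by exists B => r [x [hx ->]]; exact: hB.
have [m [hub hlub]] := completeness E hbound (ex_intro _ (g x0) (ex_intro _ x0 (conj hx0 erefl))).
exists m; split; first by move=> x hx; apply: hub; exists x.
move=> n; apply: Classical_Prop.NNPP => hn.
have hpos : 0 < / (INR n + 1) by apply: Rinv_0_lt_compat; have := pos_INR n; lra.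
have : m <= m - / (INR n + 1); last lra.
apply: hlub => r [x [hx ->]]; apply: Rnot_lt_le => hlt; apply: hn; exists x; split => //.
Qed.

End Sequences.

Section VectorLimits.
Variable q : nat.

Lemma dot_cv (xs : nat -> vec q) xb y : (forall i, Un_cv (fun n => xs n i) (xb i)) ->
  Un_cv (fun n => dot (xs n) y) (dot xb y).
Proof.
move=> h; apply: (@sumI_cv _ (fun n i => xs n i * y i)) => i.
by apply: CV_mult => //; exact: cv_const.
Qed.

Lemma dot_self_cv (xs : nat -> vec q) xb : (forall i, Un_cv (fun n => xs n i) (xb i)) ->
  Un_cv (fun n => dot (xs n) (xs n)) (dot xb xb).
Proof. by move=> h; apply: (@sumI_cv _ (fun n i => xs n i * xs n i)) => i; exact: CV_mult. Qed.

Lemma bil_self_cv (A : mat q) (xs : nat -> vec q) xb :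
  (forall i, Un_cv (fun n => xs n i) (xb i)) ->
  Un_cv (fun n => bil A (xs n) (xs n)) (bil A xb xb).
Proof.
move=> h; apply: (@sumI_cv _ (fun n i => sumI (fun j => xs n i * A i j * xs n j))) => i.
apply: (@sumI_cv _ (fun n j => xs n i * A i j * xs n j)) => j.
by apply: CV_mult => //; apply: CV_mult => //; exact: cv_const.
Qed.

End VectorLimits.

Lemma rayleigh_bound q (A : mat q) x : dot x x = 1 -> bil A x x <= inner A A + 1.
Proof.
move=> hx; have := bil_frob_bound A x x; rewrite hx.
have : 0 <= inner A A by apply: sumI_nonneg => i; apply: sumI_nonneg => j; nra.
move=> h0 h; nra.
Qed.

Lemma quad_linear_zero a c : (forall t, 2 * t * a <= t * t * c) -> a = 0.
Proof.
move=> h; pose K := Rabs c + 1.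
have hK : 0 < K by have := Rabs_pos c; rewrite /K; lra.
have hc : 0 < 2 * K - c by have := Rle_abs c; have := Rabs_pos c; rewrite /K; lra.
pose t := a / K.
have ha : a = t * K by rewrite /t; field; lra.
have := h t; rewrite ha => ht.
have ht2 : t * t * (2 * K - c) <= 0 by nra.
have : t * t <= 0.
  apply: (Rmult_le_reg_r (2 * K - c)) => //; lra.
move=> htt; have -> : t = 0 by nra.
ring.
Qed.

(* The spectral theorem for a symmetric matrix A, proved variationally:
   given k < q orthonormal eigenvectors u_0, ..., u_{k-1}, a maximiser of the
   quadratic form x^T A x over the unit vectors orthogonal to them exists
   (compactness) and is again an eigenvector (first-order optimality). *)
Section Spectral.
Variable q : nat.
Variable A : mat q.
Hypothesis hA : is_sym A.

Definition ortho_fam k (u : nat -> vec q) : Prop :=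
  forall i j, (i < k)%nat -> (j < k)%nat -> dot (u i) (u j) = if i == j then 1 else 0.
Definition eig_fam k (u : nat -> vec q) (lam : nat -> R) : Prop :=
  forall i, (i < k)%nat -> forall r, mv A (u i) r = lam i * u i r.

Section Step.
Variables (k : nat) (u : nat -> vec q).

Definition adm (x : vec q) : Prop :=
  dot x x = 1 /\ forall i, (i < k)%nat -> dot x (u i) = 0.

Lemma adm_nonempty : (k < q)%nat -> exists x, adm x.
Proof.
move=> hk; have [v [hv [j hj]]] := exists_orthogonal_vector u hk.
have hp := dot_pos hj.
have hs0 : 0 < sqrt (dot v v) by apply: sqrt_lt_R0.
exists (fun i => / sqrt (dot v v) * v i); split.
- rewrite dot_scal dot_comm dot_scal -Rmult_assoc -Rinv_mult sqrt_sqrt; last lra.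
  by rewrite Rinv_l //; lra.
- by move=> i hi; rewrite dot_scal hv //; ring.
Qed.

Lemma adm_closed (xs : nat -> vec q) xb : (forall n, adm (xs n)) ->
  (forall i, Un_cv (fun n => xs n i) (xb i)) -> adm xb.
Proof.
move=> hxs hcv; split.
- apply: (UL_sequence (fun n => dot (xs n) (xs n))); first exact: dot_self_cv.
  rewrite (_ : (fun n => _) = fun _ => 1); first exact: cv_const.
  by apply: functional_extensionality => n; exact: (proj1 (hxs n)).
- move=> i hi; apply: (UL_sequence (fun n => dot (xs n) (u i))); first exact: dot_cv.
  rewrite (_ : (fun n => _) = fun _ => 0); first exact: cv_const.
  by apply: functional_extensionality => n; exact: (proj2 (hxs n)).
Qed.

Lemma rayleigh_max : (k < q)%nat ->
  exists xb, adm xb /\ forall x, adm x -> bil A x x <= bil A xb xb.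
Proof.
move=> hk.
have [m [hub happ]] := @sup_approx _ adm (fun x => bil A x x) _ (adm_nonempty hk)
  (fun x hx => rayleigh_bound A (proj1 hx)).
have [xs hxs] := choice _ happ.
have [phi [hphi [xb hxb]]] := @bounded_fin_cv_subseq _ (fun n i => xs n i) 1
  (fun n i => unit_coord_bound i (proj1 (proj1 (hxs n)))).
have hcv := @bil_self_cv _ A (fun n => xs (phi n)) xb hxb.
have hle : bil A xb xb <= m.
  apply: (Rle_cv_lim _ hcv (cv_const m)) => n.
  exact/hub/(proj1 (hxs _)).
have hge : m <= bil A xb xb.
  apply: (@Rle_cv_lim (fun n => m - / (INR (phi n) + 1)) _ _ _ _ _ hcv).
  - by move=> n; apply: Rlt_le; exact: (proj2 (hxs _)).
  - rewrite -[X in Un_cv _ X]Rminus_0_r; apply: CV_minus; first exact: cv_const.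
    exact: (cv_subseq (u := fun n => / (INR n + 1))) hphi inv_succ_cv0.
exists xb; split; first by apply: (adm_closed (xs := fun n => xs (phi n))) => // n; exact: (proj1 (hxs _)).
by move=> x hx; have := hub x hx; lra.
Qed.

Section Maximiser.
Variable xb : vec q.
Hypothesis hxb : adm xb.
Hypothesis hmax : forall x, adm x -> bil A x x <= bil A xb xb.

Lemma rayleigh_homogeneous z : (forall i, (i < k)%nat -> dot z (u i) = 0) ->
  0 < dot z z -> bil A z z <= bil A xb xb * dot z z.
Proof.
move=> hz hzp; set c := / sqrt (dot z z).
have hcc : c * c = / dot z z by rewrite /c -Rinv_mult sqrt_sqrt //; lra.
have hadm : adm (fun i => c * z i).
  split; last by move=> i hi; rewrite dot_scal hz //; ring.
  by rewrite dot_scal dot_comm dot_scal -Rmult_assoc hcc Rinv_l //; lra.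
have := hmax hadm; rewrite bil_scal hcc => h.
have := Rmult_le_compat_l (dot z z) _ _ (Rlt_le _ _ hzp) h.
by rewrite -Rmult_assoc Rinv_r; [lra | lra].
Qed.

Lemma rayleigh_first_order y : (forall i, (i < k)%nat -> dot y (u i) = 0) ->
  dot y xb = 0 -> bil A y xb = 0.
Proof.
move=> hy hyx; have [hx1 hx2] := hxb.
apply: (@quad_linear_zero _ (bil A xb xb * dot y y - bil A y y)) => t.
pose z := fun i => 1 * xb i + t * y i.
have hzu : forall i, (i < k)%nat -> dot z (u i) = 0.
  by move=> i hi; rewrite /z dot_lin hx2 // hy //; ring.
have hzz : dot z z = 1 + t * t * dot y y.
  rewrite /z dot_lin (dot_comm xb) (dot_comm y) !dot_lin hx1 hyx (dot_comm xb y) hyx; ring.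
have hzp : 0 < dot z z by rewrite hzz; have := dot_nonneg y; nra.
have := rayleigh_homogeneous hzu hzp.
rewrite hzz /z bil_lin_l !bil_lin_r (bil_sym _ _ hA) ; lra.
Qed.

(* If u_0, ..., u_{k-1} are eigenvectors, the maximiser is an eigenvector too,
   with eigenvalue the maximal value: the residual A xb - m xb is orthogonal
   to the u_i and to xb, hence to A xb by the Lagrange condition. *)
Variable lam : nat -> R.
Hypothesis heig : eig_fam k u lam.

Lemma maximiser_eigen r : mv A xb r = bil A xb xb * xb r.
Proof.
have [hx1 hx2] := hxb; set m := bil A xb xb.
pose z := fun r => 1 * mv A xb r + (- m) * xb r.
have hzu : forall i, (i < k)%nat -> dot z (u i) = 0.
  move=> i hi; rewrite /z dot_lin hx2 // mv_sym //.
  rewrite (_ : mv A (u i) = fun r => lam i * u i r);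
    last by apply: functional_extensionality => r'; exact: heig.
  by rewrite dot_comm dot_scal dot_comm hx2 //; ring.
have hzx : dot z xb = 0 by rewrite /z dot_lin hx1 dot_comm -bil_dot -/m; ring.
have hzz : dot z z = 0.
  have := rayleigh_first_order hzu hzx; rewrite bil_dot.
  have -> : dot z (mv A xb) = dot z z + m * dot z xb.
    by rewrite /dot -sumI_scal -sumI_add; apply: sumI_ext => r'; rewrite /z; ring.
  by rewrite hzx; lra.
by have := dot_zero hzz r; rewrite /z; lra.
Qed.

End Maximiser.

Lemma eigen_step : (k < q)%nat -> forall lam, eig_fam k u lam ->
  exists x m, adm x /\ forall r, mv A x r = m * x r.
Proof.
move=> hk lam heig; have [xb [hxb hmax]] := rayleigh_max hk.
by exists xb, (bil A xb xb); split => //; exact: (maximiser_eigen hxb hmax heig).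
Qed.

End Step.

Lemma ltnS_cases i k : (i < k.+1)%nat -> i = k \/ (i < k)%nat.
Proof. by rewrite ltnS leq_eqVlt => /orP [/eqP|]; [left|right]. Qed.

Lemma eigen_families k : (k <= q)%nat -> exists u lam, ortho_fam k u /\ eig_fam k u lam.
Proof.
elim: k => [_ | k IH hk]; first by exists (fun _ _ => 0), (fun _ => 0); split.
have [u [lam [ho he]]] := IH (ltnW hk).
have [x [m [[hx1 hx2] hxe]]] := eigen_step hk he.
exists (fun i => if i == k then x else u i), (fun i => if i == k then m else lam i).
split.
- move=> i j /ltnS_cases [-> | hi] /ltnS_cases [-> | hj].
  + by rewrite eqxx.
  + by rewrite eqxx (ltn_eqF hj) (gtn_eqF hj) hx2.
  + by rewrite eqxx (ltn_eqF hi) dot_comm hx2.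
  + by rewrite (ltn_eqF hi) (ltn_eqF hj); exact: ho.
- move=> i /ltnS_cases [-> | hi] r.
  + by rewrite eqxx; exact: hxe.
  + by rewrite (ltn_eqF hi); exact: he.
Qed.

End Spectral.

Lemma spectral_decomposition q (A : mat q) : is_sym A ->
  exists U d, orthogonal U /\ (forall k r, mv A (colv U k) r = d k * U r k)
     /\ forall i j, A i j = sumI (fun k => U i k * d k * U j k).
Proof.
move=> hA; have [u [lam [ho he]]] := eigen_families hA (leqnn q).
pose U : mat q := fun r c => u (nat_of_ord c) r.
pose d : vec q := fun c => lam (nat_of_ord c).
have hU : orthogonal U by move=> i j; rewrite -(val_eqE i j); exact: ho.
have hev : forall k r, mv A (colv U k) r = d k * U r k by move=> k r; exact: he.
exists U, d; split => //; split => // i j.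
have hrows := orthogonal_rows hU.
transitivity (sumI (fun l => A i l * (if j == l then 1 else 0))).
  by rewrite sumI_delta_r.
transitivity (sumI (fun l => sumI (fun k => A i l * U l k * U j k))).
  by apply: sumI_ext => l; rewrite -hrows -sumI_scal; apply: sumI_ext => k; ring.
rewrite sumI_swap; apply: sumI_ext => k.
transitivity (mv A (colv U k) i * U j k); first by rewrite /mv -sumI_scalr.
by rewrite hev; ring.
Qed.

Lemma psd_svd q (Y : mat q) : psd Y -> exists U d, svd Y U U d.
Proof.
move=> [hs hp]; have [U [d [hU [hev hY]]]] := spectral_decomposition hs.
exists U, d; split; first exact: hU; split; first exact: hU; split => // k.
have := hp (colv U k); rewrite -/(bil Y _ _) bil_dot.
rewrite (_ : mv Y (colv U k) = fun r => d k * colv U k r);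
  last by apply: functional_extensionality => r; exact: hev.
by rewrite dot_comm dot_scal orth_col // eqxx; lra.
Qed.

(* The largest of nonnegative numbers d_0, ..., d_{q-1} (0 if q = 0). *)
Section MaxI.
Variable q : nat.
Implicit Types d : vec q.

Lemma maxI_cases d : maxI d = 0 \/ exists k, maxI d = d k.
Proof.
rewrite /maxI; apply: (big_ind (fun v => v = 0 \/ exists k, v = d k)).
- by left.
- by move=> a b ha hb; rewrite /Rmax; case: Rle_dec => _.
- by move=> i _; right; exists i.
Qed.

Lemma maxI_bounds d : (forall k, 0 <= d k) -> 0 <= maxI d /\ forall k, d k <= maxI d.
Proof.
move=> hd; rewrite /maxI.
suff : forall r : seq 'I_q, 0 <= \big[Rmax/0]_(j <- r) d j /\
   forall k, k \in r -> d k <= \big[Rmax/0]_(j <- r) d j.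
  move=> /(_ (index_enum 'I_q)) [h1 h2]; split => // k; apply: h2.
  by rewrite mem_index_enum.
elim => [|i r [IH1 IH2]]; first by rewrite big_nil; split; [lra|].
rewrite big_cons; split; first exact: Rle_trans (Rmax_r _ _).
move=> k; rewrite in_cons => /orP [/eqP -> | hk]; first exact: Rmax_l.
exact: Rle_trans (IH2 k hk) (Rmax_r _ _).
Qed.

Lemma maxI_le_sum d : (forall k, 0 <= d k) -> maxI d <= sumI d.
Proof.
move=> hd; case: (maxI_cases d) => [-> | [k ->]]; first exact: sumI_nonneg.
exact: sumI_ge_term.
Qed.

Definition single_support d : Prop := forall k l, k != l -> d k = 0 \/ d l = 0.

Lemma sum_eq_max_iff d : (forall k, 0 <= d k) -> (sumI d = maxI d <-> single_support d).
Proof.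
move=> hd; have [hm0 hm] := maxI_bounds hd; split.
- move=> heq k l hkl; case: (maxI_cases d) => [h0 | [k0 hk0]].
    by left; apply: (sumI_zero_nonneg hd _ k); rewrite heq.
  have hrest : forall j, j != k0 -> d j = 0.
    have hnn : forall j, 0 <= (if j == k0 then 0 else d j).
      by move=> j; case: (j == k0); [lra | exact: hd].
    have hz : sumI (fun j => if j == k0 then 0 else d j) = 0.
      by have := sumI_split d k0; rewrite heq hk0; lra.
    by move=> j hj; have := sumI_zero_nonneg hnn hz j; rewrite (negbTE hj).
  case: (eqVneq k k0) => [hk | hk]; last by left; exact: hrest.
  by right; apply: hrest; rewrite -hk eq_sym.
- move=> hs; apply: Rle_antisym; last exact: maxI_le_sum.
  case: (Classical_Prop.classic (exists k, d k <> 0)) => [[k hk] | hn].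
  + rewrite (sumI_split _ k) (sumI_ext (G := fun _ => 0)) ?sumI_0.
      by have := hm k; lra.
    move=> l; case: eqP => [//|/eqP hl].
    by case: (hs k l); [rewrite eq_sym | move/hk | ].
  + rewrite (sumI_ext (G := fun _ => 0)) ?sumI_0 // => l.
    by apply: Classical_Prop.NNPP => hl; apply: hn; exists l.
Qed.

End MaxI.

Section SVD.
Variable q : nat.
Variables (Y U V : mat q) (d : vec q).
Hypothesis hsvd : svd Y U V d.

Lemma bil_svd x y : bil Y x y = sumI (fun k => d k * dot x (colv U k) * dot y (colv V k)).
Proof.
have [_ [_ [_ hY]]] := hsvd; rewrite /bil.
transitivity (sumI (fun i => sumI (fun j => sumI (fun k =>
    x i * U i k * d k * V j k * y j)))).
  apply: sumI_ext => i; apply: sumI_ext => j; rewrite hY -sumI_scal -sumI_scalr.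
  by apply: sumI_ext => k; ring.
transitivity (sumI (fun i => sumI (fun k => sumI (fun j =>
    x i * U i k * d k * V j k * y j)))).
  by apply: sumI_ext => i; exact: sumI_swap.
rewrite sumI_swap; apply: sumI_ext => k.
rewrite Rmult_assoc /dot /colv sumI_mul -sumI_scal.
by apply: sumI_ext => i; rewrite -sumI_scal; apply: sumI_ext => j; ring.
Qed.

Lemma bil_svd_left_col k y : bil Y (colv U k) y = d k * dot y (colv V k).
Proof.
have [hU _] := hsvd; rewrite bil_svd.
rewrite (sumI_ext (G := fun l => (if l == k then 1 else 0) * (d l * dot y (colv V l)))).
  exact: (sumI_delta (fun l => d l * dot y (colv V l))).
by move=> l; rewrite orth_col // eq_sym; case: (l == k); ring.
Qed.

Lemma bil_svd_right_col k x : bil Y x (colv V k) = d k * dot x (colv U k).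
Proof.
have [_ [hV _]] := hsvd; rewrite bil_svd.
rewrite (sumI_ext (G := fun l => (if l == k then 1 else 0) * (d l * dot x (colv U l)))).
  exact: (sumI_delta (fun l => d l * dot x (colv U l))).
by move=> l; rewrite orth_col // eq_sym; case: (l == k); ring.
Qed.

(* |x^T Y y| <= max_k d_k |x| |y|, by Cauchy-Schwarz and Parseval. *)
Lemma svd_bil_bound x y :
  bil Y x y * bil Y x y <= (maxI d * maxI d) * dot x x * dot y y.
Proof.
have [hU [hV [hd _]]] := hsvd; have [hm0 hm] := maxI_bounds hd.
rewrite bil_svd.
set a := fun k => dot x (colv U k); set b := fun k => dot y (colv V k).
set T := sumI (fun k => Rabs (a k) * Rabs (b k)).
have hT : T * T <= dot x x * dot y y.
  have hTa : sumI (fun k => Rabs (a k) * Rabs (a k)) = dot x x.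
    rewrite -(parseval x hU); apply: sumI_ext => k.
    by rewrite -Rabs_mult Rabs_pos_eq // /a; nra.
  have hTb : sumI (fun k => Rabs (b k) * Rabs (b k)) = dot y y.
    rewrite -(parseval y hV); apply: sumI_ext => k.
    by rewrite -Rabs_mult Rabs_pos_eq // /b; nra.
  by have := cauchy_schwarz (fun k => Rabs (a k)) (fun k => Rabs (b k)); rewrite /dot hTa hTb.
have hT0 : 0 <= T.
  by apply: sumI_nonneg => k; apply: Rmult_le_pos; exact: Rabs_pos.
set S := sumI (fun k => d k * a k * b k).
have hS : Rabs S <= maxI d * T.
  apply: Rle_trans (sumI_abs _) _; rewrite /T -sumI_scal; apply: sumI_le => k.
  rewrite !Rabs_mult (Rabs_pos_eq (d k)) // Rmult_assoc.
  apply: Rmult_le_compat_r; [apply: Rmult_le_pos; exact: Rabs_pos | exact: hm].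
have : S * S <= (maxI d * T) * (maxI d * T).
  rewrite -[S * S]Rabs_pos_eq; last nra.
  by rewrite Rabs_mult; have := Rabs_pos S; nra.
have := dot_nonneg x; have := dot_nonneg y; nra.
Qed.

Lemma svd_bil_attain : exists x y, dot x x <= 1 /\ dot y y <= 1 /\ bil Y x y = maxI d.
Proof.
have [hU [hV _]] := hsvd; case: (maxI_cases d) => [-> | [k ->]].
- exists (fun _ => 0), (fun _ => 0); rewrite dot_zero_l bil_zero_l; lra.
- exists (colv U k), (colv V k); rewrite !orth_col // eqxx bil_svd_left_col.
  by rewrite orth_col // eqxx; lra.
Qed.

Lemma psd_svd_aligned k : psd Y -> d k * dot (colv U k) (colv V k) = d k.
Proof.
move=> [hsym hpsd]; have [hU [hV [hd _]]] := hsvd.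
have hUV := bil_svd_left_col k (colv V k); rewrite orth_col // eqxx in hUV.
have hUU := bil_svd_left_col k (colv U k).
have hVV := bil_svd_right_col k (colv V k).
have hcs := cauchy_schwarz (colv U k) (colv V k).
rewrite !orth_col // eqxx in hcs.
have := hpsd (fun i => 1 * colv U k i + (-1) * colv V k i).
rewrite -/(bil Y _ _) bil_lin_l !bil_lin_r hUU hVV hUV (bil_sym _ _ hsym) hUV.
rewrite (dot_comm (colv V k)) Rmult_1_r.
have := hd k; nra.
Qed.

Lemma svd_trace : psd Y -> sumI d = sumI (fun i => Y i i).
Proof.
move=> hY; have [_ [_ [_ hYe]]] := hsvd.
rewrite (sumI_ext (F := fun i => Y i i) (G := fun i => sumI (fun k => U i k * d k * V i k)));
  last by move=> i; exact: hYe.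
rewrite sumI_swap.
apply: sumI_ext => k; rewrite -{1}(psd_svd_aligned k hY) /dot -sumI_scal.
by apply: sumI_ext => i; rewrite /colv; ring.
Qed.

Lemma svd_mv_right_col k i : mv Y (colv V k) i = d k * U i k.
Proof.
have [hU [hV [hd hY]]] := hsvd; rewrite /mv.
transitivity (sumI (fun l => U i l * d l * dot (colv V l) (colv V k))).
  rewrite (sumI_ext (G := fun j => sumI (fun l => U i l * d l * V j l * V j k))).
    rewrite sumI_swap; apply: sumI_ext => l; rewrite /dot -sumI_scal.
    by apply: sumI_ext => j; rewrite /colv; ring.
  by move=> j; rewrite hY -sumI_scalr.
rewrite (sumI_ext (G := fun l => (if l == k then 1 else 0) * (d l * U i l))) ?sumI_delta //.
by move=> l; rewrite orth_col //; case: (l == k); ring.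
Qed.

Lemma svd_rank_le1_iff : rank_le1 Y <-> single_support d.
Proof.
have [hU [hV [hd hY]]] := hsvd; split.
- move=> [u hu]; have [c hc] := fin_all_exists hu.
  pose g k := sumI (fun j => c j * V j k).
  (* d_k U_k = Y V_k lies on the line spanned by u *)
  have hline : forall k i, d k * U i k = g k * u i.
    move=> k i; rewrite -svd_mv_right_col /mv /g -sumI_scalr.
    by apply: sumI_ext => j; rewrite hc /colv; ring.
  have hgram : forall k l, d k * d l * dot (colv U k) (colv U l) = g k * g l * dot u u.
    move=> k l; rewrite /dot -sumI_scal -(sumI_scal (g k * g l)); apply: sumI_ext => i.
    transitivity ((d k * U i k) * (d l * U i l)); first by rewrite /colv; ring.
    by rewrite !hline; ring.
  move=> k l hkl.
  have hkk := hgram k k; have hll := hgram l l; have hkl' := hgram k l.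
  rewrite orth_col // eqxx in hkk; rewrite orth_col // eqxx in hll.
  rewrite orth_col // (negbTE hkl) in hkl'.
  have : (d k * d k) * (d l * d l) = 0.
    have -> : (d k * d k) * (d l * d l) = (g k * g l * dot u u) * (g k * g l * dot u u).
      by rewrite -[d k * d k]Rmult_1_r -[d l * d l]Rmult_1_r hkk hll; ring.
    by rewrite -hkl'; ring.
  by move=> /Rmult_integral [] /Rmult_integral [] ->; auto.
- move=> hs.
  case: (Classical_Prop.classic (exists k, d k <> 0)) => [[k hk] | hn].
  + exists (colv U k) => j; exists (d k * V j k) => i.
    rewrite hY (sumI_split _ k) (sumI_ext (G := fun _ => 0)) ?sumI_0; first by rewrite /colv; ring.
    move=> l; case: eqP => [//|/eqP hl].
    by case: (hs k l); [rewrite eq_sym | move/hk | move=> ->; ring].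
  + exists (fun _ => 0) => j; exists 0 => i.
    rewrite hY (sumI_ext (G := fun _ => 0)) ?sumI_0; first ring.
    move=> l; have -> : d l = 0 by apply: Classical_Prop.NNPP => hl; apply: hn; exists l.
    ring.
Qed.

End SVD.

Lemma le_of_sq_le b c s t : 0 <= c -> 0 <= s <= 1 -> 0 <= t <= 1 ->
  b * b <= (c * c) * s * t -> b <= c.
Proof. move=> hc hs ht h; have : s * t <= 1 by nra. nra. Qed.

Lemma svd_max_lipschitz q (Y Z UY VY UZ VZ : mat q) dY dZ t :
  svd Y UY VY dY -> svd Z UZ VZ dZ -> 0 <= t ->
  inner (fun i j => Y i j - Z i j) (fun i j => Y i j - Z i j) <= t * t ->
  maxI dY - maxI dZ <= t.
Proof.
move=> hY hZ ht hW.
have [x [y [hx [hy hb]]]] := svd_bil_attain hY.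
have [_ [_ [hdZ _]]] := hZ.
have hx0 := dot_nonneg x; have hy0 := dot_nonneg y.
have hZxy : bil Z x y <= maxI dZ.
  apply: (le_of_sq_le (proj1 (maxI_bounds hdZ)) (conj hx0 hx) (conj hy0 hy)).
  exact: (svd_bil_bound hZ x y).
have hWxy : bil (fun i j => Y i j - Z i j) x y <= t.
  apply: (le_of_sq_le ht (conj hx0 hx) (conj hy0 hy)).
  apply: Rle_trans (bil_frob_bound _ _ _) _.
  have := Rmult_le_pos _ _ hx0 hy0; nra.
have hsplit : bil Y x y = bil Z x y + bil (fun i j => Y i j - Z i j) x y.
  rewrite /bil -sumI_add; apply: sumI_ext => i; rewrite -sumI_add.
  by apply: sumI_ext => j; ring.
lra.
Qed.

Lemma svd_max_unique q (Y U1 V1 U2 V2 : mat q) d1 d2 :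
  svd Y U1 V1 d1 -> svd Y U2 V2 d2 -> maxI d1 = maxI d2.
Proof.
have hW : inner (fun i j => Y i j - Y i j) (fun i j => Y i j - Y i j) <= 0 * 0.
  rewrite /inner (sumI_ext (G := fun _ => 0)) ?sumI_0; first lra.
  by move=> i; rewrite (sumI_ext (G := fun _ => 0)) ?sumI_0 // => j; ring.
move=> h1 h2; have := svd_max_lipschitz h1 h2 (Rle_refl 0) hW.
have := svd_max_lipschitz h2 h1 (Rle_refl 0) hW; lra.
Qed.

Section PsdNorms.
Variable q : nat.
Implicit Types Y Z : mat q.

Definition rank_gap Y : R := nuclear_norm Y - spectral_norm Y.

Lemma psd_norms Y : psd Y -> exists U V d, svd Y U V d /\
  nuclear_norm Y = sumI d /\ spectral_norm Y = maxI d.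
Proof.
move=> hY; have [U [d hs]] := psd_svd hY.
exists U, U, d; split => //; split; rewrite /nuclear_norm /spectral_norm.
- have ex : exists s, exists U V d, svd Y U V d /\ s = sumI d by exists (sumI d), U, U, d.
  have [U1 [V1 [d1 [hs1 ->]]]] := epsilon_spec (inhabits R0) _ ex.
  by rewrite (svd_trace hs1 hY) (svd_trace hs hY).
- have ex : exists s, exists U V d, svd Y U V d /\ s = maxI d by exists (maxI d), U, U, d.
  have [U1 [V1 [d1 [hs1 ->]]]] := epsilon_spec (inhabits R0) _ ex.
  exact: svd_max_unique hs1 hs.
Qed.

Lemma nuclear_norm_psd Y : psd Y -> nuclear_norm Y = sumI (fun i => Y i i).
Proof. by move=> hY; have [U [V [d [hs [-> _]]]]] := psd_norms hY; exact: svd_trace hs hY. Qed.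

Lemma spectral_norm_lipschitz Y Z t : psd Y -> psd Z -> 0 <= t ->
  inner (fun i j => Y i j - Z i j) (fun i j => Y i j - Z i j) <= t * t ->
  spectral_norm Y - spectral_norm Z <= t.
Proof.
move=> hY hZ; have [U [V [d [hs [_ ->]]]]] := psd_norms hY.
have [U' [V' [d' [hs' [_ ->]]]]] := psd_norms hZ.
exact: svd_max_lipschitz hs hs'.
Qed.

Lemma rank_gap_nonneg Y : psd Y -> 0 <= rank_gap Y.
Proof.
move=> hY; have [U [V [d [[_ [_ [hd _]]] [h1 h2]]]]] := psd_norms hY.
by rewrite /rank_gap h1 h2; have := maxI_le_sum hd; lra.
Qed.

Lemma rank_gap_zero_iff Y : psd Y -> (rank_gap Y = 0 <-> rank_le1 Y).
Proof.
move=> hY; have [U [V [d [hs [h1 h2]]]]] := psd_norms hY; have [_ [_ [hd _]]] := hs.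
rewrite /rank_gap h1 h2 (svd_rank_le1_iff hs) -(sum_eq_max_iff hd); lra.
Qed.

End PsdNorms.

Section Frobenius.
Variable q : nat.
Implicit Types C W Y Z : mat q.

Lemma inner_self_nonneg W : 0 <= inner W W.
Proof. by apply: sumI_nonneg => i; apply: sumI_nonneg => j; nra. Qed.

Lemma frob_entry_bound W i j : Rabs (W i j) <= frob W.
Proof.
rewrite -sqrt_Rsqr_abs /frob; apply: sqrt_le_1_alt; rewrite /Rsqr.
have hsq : forall a b, 0 <= W a b * W a b by move=> a b; nra.
have hrow := @sumI_ge_term _ (fun j => W i j * W i j) j (hsq i).
have hall := @sumI_ge_term _ (fun i => sumI (fun j => W i j * W i j)) i
  (fun a => sumI_nonneg (hsq a)).
rewrite /inner; lra.
Qed.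

Lemma frob_le_of_inner W t : 0 <= t -> inner W W <= t * t -> frob W <= t.
Proof. by move=> ht h; rewrite /frob -(sqrt_square t) //; exact: sqrt_le_1_alt. Qed.

Lemma inner_le_of_frob W M : frob W <= M -> inner W W <= M * M.
Proof.
move=> h; have h0 : 0 <= frob W by apply: sqrt_pos.
by have := sqrt_sqrt _ (inner_self_nonneg W); rewrite -/(frob W) => <-; nra.
Qed.

Lemma inner_diff_sym Y Z :
  inner (fun i j => Y i j - Z i j) (fun i j => Y i j - Z i j) =
  inner (fun i j => Z i j - Y i j) (fun i j => Z i j - Y i j).
Proof. by apply: sumI_ext => i; apply: sumI_ext => j; ring. Qed.

Lemma frob_diff_bound Y Z M : frob Y <= M -> frob Z <= M -> frob (madd Y (mopp Z)) <= 2 * M.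
Proof.
move=> hY hZ.
have hM : 0 <= M by have := sqrt_pos (inner Y Y); rewrite -/(frob Y); lra.
apply: frob_le_of_inner; first lra.
have h1 := inner_le_of_frob hY; have h2 := inner_le_of_frob hZ.
have : inner (madd Y (mopp Z)) (madd Y (mopp Z)) <= 2 * inner Y Y + 2 * inner Z Z.
  rewrite /inner -!sumI_scal -sumI_add; apply: sumI_le => i.
  rewrite -!sumI_scal -sumI_add; apply: sumI_le => j.
  by rewrite /madd /mopp; have := Rle_0_sqr (Y i j + Z i j); rewrite /Rsqr; lra.
lra.
Qed.

Definition abs_sum C : R := sumI (fun i => sumI (fun j => Rabs (C i j))).

Lemma abs_sum_nonneg C : 0 <= abs_sum C.
Proof. by apply: sumI_nonneg => i; apply: sumI_nonneg => j; exact: Rabs_pos. Qed.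

Lemma inner_lipschitz C Y Z : inner C Z - inner C Y <= abs_sum C * frob (madd Y (mopp Z)).
Proof.
rewrite /inner -sumI_sub /abs_sum -sumI_scalr; apply: sumI_le => i.
rewrite -sumI_sub -sumI_scalr; apply: sumI_le => j.
have h := frob_entry_bound (madd Y (mopp Z)) i j; rewrite /madd /mopp in h.
have -> : C i j * Z i j - C i j * Y i j = - (C i j * (Y i j + - Z i j)) by ring.
apply: Rle_trans (Rle_abs _) _; rewrite Rabs_Ropp Rabs_mult.
by apply: Rmult_le_compat_l => //; exact: Rabs_pos.
Qed.

End Frobenius.

Section MatrixLimits.
Variable q : nat.
Implicit Types Y : mat q.

Definition mcv (Ys : nat -> mat q) (Yb : mat q) : Prop :=
  forall i j, Un_cv (fun n => Ys n i j) (Yb i j).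

Lemma mcv_dist_cv0 Ys Yb : mcv Ys Yb ->
  Un_cv (fun n => inner (fun i j => Ys n i j - Yb i j) (fun i j => Ys n i j - Yb i j)) 0.
Proof.
move=> hc.
have -> : 0 = inner (fun _ _ => 0) (fun _ _ : 'I_q => 0).
  rewrite /inner (sumI_ext (G := fun _ => 0)) ?sumI_0 // => i.
  by rewrite (sumI_ext (G := fun _ => 0)) ?sumI_0 // => j; ring.
apply: (@sumI_cv _ (fun n i => sumI (fun j => (Ys n i j - Yb i j) * (Ys n i j - Yb i j)))) => i.
apply: (@sumI_cv _ (fun n j => (Ys n i j - Yb i j) * (Ys n i j - Yb i j))) => j.
have hd : Un_cv (fun n => Ys n i j - Yb i j) 0.
  by rewrite -(Rminus_diag (Yb i j)); apply: CV_minus => //; exact: cv_const.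
by have := CV_mult _ _ _ _ hd hd; rewrite Rmult_0_l.
Qed.

Lemma eventually_le (u : nat -> R) e : Un_cv u 0 -> 0 < e ->
  exists N, forall n, (N <= n)%nat -> u n <= e.
Proof.
move=> h he; have [N hN] := h e he; exists N => n hn.
have := hN n (elimT leP hn); rewrite /R_dist Rminus_0_r => h'.
have := Rle_abs (u n); lra.
Qed.

(* The rank gap is continuous on PSD matrices: the nuclear norm is the
   trace and the spectral norm is 1-Lipschitz. *)
Lemma rank_gap_cv Ys Yb : (forall n, psd (Ys n)) -> psd Yb -> mcv Ys Yb ->
  Un_cv (fun n => rank_gap (Ys n)) (rank_gap Yb).
Proof.
move=> hYs hYb hc; rewrite /rank_gap; apply: CV_minus.
- rewrite (_ : (fun n => nuclear_norm (Ys n)) = fun n => sumI (fun i => Ys n i i));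
    last by apply: functional_extensionality => n; exact: nuclear_norm_psd.
  rewrite nuclear_norm_psd //.
  by apply: (@sumI_cv _ (fun n i => Ys n i i)) => i; exact: hc.
- move=> e he.
  have he2 : 0 < (e / 2) * (e / 2) by nra.
  have he2' : 0 <= e / 2 by lra.
  have [N hN] := eventually_le (mcv_dist_cv0 hc) he2.
  exists N => n hn; rewrite /R_dist.
  have hn' : (N <= n)%nat by exact/leP.
  have h1 := spectral_norm_lipschitz (hYs n) hYb he2' (hN n hn').
  have h2 := spectral_norm_lipschitz hYb (hYs n) he2'.
  rewrite -inner_diff_sym in h2; have := h2 (hN n hn').
  by move=> h3; apply: Rabs_def1; lra.
Qed.

End MatrixLimits.

(* For the constraints we
   expand a symmetric matrix on the basis (E_ij + E_ji)/2 of symmetric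
   matrices, on which the map is linear. *)
Section OmegaClosed.
Variables q m : nat.
Variable Amap : mat q -> vec m.
Hypothesis hA : linear_on_sym Amap.
Implicit Types Y W : mat q.

Definition sym_basis (i j : 'I_q) : mat q := fun a c =>
  ((if i == a then 1 else 0) * (if j == c then 1 else 0) +
   (if i == c then 1 else 0) * (if j == a then 1 else 0)) / 2.

Lemma sym_basis_sym i j : is_sym (sym_basis i j).
Proof. by move=> a c; rewrite /sym_basis; field. Qed.

Lemma sym_expand W : is_sym W -> forall a c,
  W a c = sumI (fun i => sumI (fun j => W i j * sym_basis i j a c)).
Proof.
move=> hW a c.
have hpick : forall a c, sumI (fun i => sumI (fun j =>
    W i j * ((if i == a then 1 else 0) * (if j == c then 1 else 0)))) = W a c.
  move=> a' c'.
  transitivity (sumI (fun i => (if i == a' then 1 else 0) * W i c')); last exact: sumI_delta.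
  apply: sumI_ext => i.
  transitivity (sumI (fun j => (if j == c' then 1 else 0) * ((if i == a' then 1 else 0) * W i j))).
    by apply: sumI_ext => j; ring.
  by rewrite sumI_delta.
transitivity ((W a c + W c a) / 2); first by rewrite hW; field.
rewrite -(hpick a c) -(hpick c a) /Rdiv -sumI_add -sumI_scalr.
apply: sumI_ext => i; rewrite -sumI_add -sumI_scalr.
by apply: sumI_ext => j; rewrite /sym_basis; field.
Qed.

Lemma linear_on_sym_zero k : Amap (fun _ _ => 0) k = 0.
Proof.
have hs : is_sym (fun _ _ : 'I_q => 0) by [].
have := hA 0 0 hs hs k.
rewrite (_ : madd (mscale 0 _) (mscale 0 _) = fun _ _ => 0); first by move=> ->; ring.
by apply: functional_extensionality => a; apply: functional_extensionality => c;
  rewrite /madd /mscale; ring.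
Qed.

Lemma linear_on_sym_sum (I : Type) (r : seq I) (G : I -> mat q) (c : I -> R) :
  (forall p, is_sym (G p)) -> forall k,
  Amap (fun a e => \big[Rplus/0]_(p <- r) (c p * G p a e)) k =
  \big[Rplus/0]_(p <- r) (c p * Amap (G p) k).
Proof.
move=> hG k; elim: r => [|p r IH].
  rewrite big_nil (_ : (fun a e => \big[Rplus/0]_(p <- [::]) (c p * G p a e)) = fun _ _ => 0).
    exact: linear_on_sym_zero.
  by apply: functional_extensionality => a; apply: functional_extensionality => e; rewrite big_nil.
set Rest := fun a e => \big[Rplus/0]_(p0 <- r) (c p0 * G p0 a e).
have hR : is_sym Rest by move=> a e; apply: eq_bigr => p0 _; rewrite hG.
rewrite (_ : (fun a e => _) = madd (mscale (c p) (G p)) (mscale 1 Rest)).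
  by rewrite hA // big_cons IH; ring.
apply: functional_extensionality => a; apply: functional_extensionality => e.
by rewrite big_cons /madd /mscale /Rest; ring.
Qed.

Lemma linear_on_sym_expand W : is_sym W -> forall k,
  Amap W k = sumI (fun i => sumI (fun j => W i j * Amap (sym_basis i j) k)).
Proof.
move=> hW k.
have e : W = fun a c => \big[Rplus/0]_(p <- index_enum (prod 'I_q 'I_q))
      (W p.1 p.2 * sym_basis p.1 p.2 a c).
  apply: functional_extensionality => a; apply: functional_extensionality => c.
  by rewrite (sym_expand hW a c) /sumI pair_big.
by rewrite {1}e linear_on_sym_sum /sumI ?pair_big // => p; exact: sym_basis_sym.
Qed.

Lemma linear_on_sym_cv (Ys : nat -> mat q) Yb :
  (forall n, is_sym (Ys n)) -> is_sym Yb -> mcv Ys Yb ->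
  forall k, Un_cv (fun n => Amap (Ys n) k) (Amap Yb k).
Proof.
move=> hYs hYb hc k; rewrite linear_on_sym_expand //.
rewrite (_ : (fun n => _) = fun n => sumI (fun i => sumI (fun j => Ys n i j * Amap (sym_basis i j) k)));
  last by apply: functional_extensionality => n; exact: linear_on_sym_expand.
apply: (@sumI_cv _ (fun n i => sumI (fun j => Ys n i j * Amap (sym_basis i j) k))) => i.
apply: (@sumI_cv _ (fun n j => Ys n i j * Amap (sym_basis i j) k)) => j.
by apply: CV_mult; [exact: hc | exact: cv_const].
Qed.

Lemma omega_closed b (Ys : nat -> mat q) Yb :
  (forall n, Omega Amap b (Ys n)) -> mcv Ys Yb -> Omega Amap b Yb.
Proof.
move=> hO hc.
have hsymn : forall n, is_sym (Ys n) by move=> n; have [[hs _] _] := hO n.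
have hsym : is_sym Yb.
  move=> i j; apply: (UL_sequence (fun n => Ys n i j)); first exact: hc.
  rewrite (_ : (fun n => Ys n i j) = fun n => Ys n j i); first exact: hc.
  by apply: functional_extensionality => n; exact: hsymn.
split; [split => // x | split => [i j | k]].
- apply: (@Rle_cv_lim (fun _ => 0) (fun n => bil (Ys n) x x)); last first.
  + apply: (@sumI_cv _ (fun n i => sumI (fun j => x i * Ys n i j * x j))) => i.
    apply: (@sumI_cv _ (fun n j => x i * Ys n i j * x j)) => j.
    by apply: CV_mult; [apply: CV_mult; [exact: cv_const | exact: hc] | exact: cv_const].
  + exact: cv_const.
  + by move=> n; have [[_ hp] _] := hO n; exact: hp.
- apply: (@Rle_cv_lim (fun _ => 0) (fun n => Ys n i j)); last exact: hc.
  + by move=> n; have [_ [hn _]] := hO n; exact: hn.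
  + exact: cv_const.
- apply: (UL_sequence (fun n => Amap (Ys n) k)); first exact: linear_on_sym_cv.
  rewrite (_ : (fun n => _) = fun _ => b k); first exact: cv_const.
  by apply: functional_extensionality => n; have [_ [_ hb]] := hO n; exact: hb.
Qed.

End OmegaClosed.

(* Global error bound: calmness of Gamma at every point of Gamma(0) and
   compactness of Omega give alpha > 0 with
     dist(Y, Gamma(0)) <= alpha * (||Y||_* - ||Y||_2)   for all Y in Omega.
   Otherwise there are Y_n in Omega with
     (n+1) * gap(Y_n) < |Y_n - Z|_F  for every Z in Gamma(0);
   a limit point Yb of (Y_n) lies in Gamma(0), and calmness at Yb is
   violated along the subsequence. *)
Section ErrorBound.
Variables q m : nat.
Variable Amap : mat q -> vec m.
Variable b : vec m.
Implicit Types Y Z : mat q.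

Definition error_bound_with (al : R) : Prop := forall Y, Omega Amap b Y ->
  exists Z, Gamma Amap b 0 Z /\ frob (madd Y (mopp Z)) <= al * rank_gap Y.

Definition violating_seq (Ys : nat -> mat q) : Prop := forall n,
  Omega Amap b (Ys n) /\ forall Z, Gamma Amap b 0 Z ->
    (INR n + 1) * rank_gap (Ys n) < frob (madd (Ys n) (mopp Z)).

Lemma violating_seq_of_no_bound :
  ~ (exists al, 0 < al /\ error_bound_with al) -> exists Ys, violating_seq Ys.
Proof.
move=> hn; apply: (choice (fun n Y => Omega Amap b Y /\ forall Z, Gamma Amap b 0 Z ->
  (INR n + 1) * rank_gap Y < frob (madd Y (mopp Z)))) => n.
apply: Classical_Prop.NNPP => hn'.
apply: hn; exists (INR n + 1); split; first by have := pos_INR n; lra.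
move=> Y hY; apply: Classical_Prop.NNPP => hz; apply: hn'; exists Y; split => // Z hZ.
by apply: Rnot_le_lt => hle; apply: hz; exists Z.
Qed.

Hypothesis hA : linear_on_sym Amap.
Hypothesis hbdd : exists M, forall Y, Omega Amap b Y -> frob Y <= M.
Hypothesis hR : exists Y, Omega Amap b Y /\ rank_le1 Y.

Lemma violating_seq_limit Ys : violating_seq Ys ->
  exists phi Yb, incr phi /\ Gamma Amap b 0 Yb /\ mcv (fun n => Ys (phi n)) Yb /\
    Un_cv (fun n => rank_gap (Ys (phi n))) 0.
Proof.
move=> hYs; have [M hM] := hbdd; have [Z0 [hZ0 hr0]] := hR.
have hpsd : forall n, psd (Ys n) by move=> n; exact: (proj1 (proj1 (hYs n))).
have hG0 : Gamma Amap b 0 Z0 by split => //; apply/(rank_gap_zero_iff (proj1 hZ0)).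
have hgap0 : Un_cv (fun n => rank_gap (Ys n)) 0.
  apply: (@scaled_bounded_cv0 _ (2 * M)) => [n | n]; first exact: rank_gap_nonneg.
  apply: Rlt_le; apply: Rlt_le_trans (proj2 (hYs n) Z0 hG0) _.
  exact: (frob_diff_bound (hM _ (proj1 (hYs n))) (hM _ hZ0)).
have hbd : forall n (p : 'I_q * 'I_q), Rabs (Ys n p.1 p.2) <= M.
  by move=> n p; apply: Rle_trans (frob_entry_bound _ _ _) (hM _ (proj1 (hYs n))).
have [phi [hphi [l hl]]] := @bounded_fin_cv_subseq _ (fun n p => Ys n p.1 p.2) M hbd.
pose Yb : mat q := fun i j => l (i, j).
have hc : mcv (fun n => Ys (phi n)) Yb by move=> i j; exact: (hl (i, j)).
have hOb : Omega Amap b Yb := omega_closed hA (fun n => proj1 (hYs (phi n))) hc.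
have hsub : Un_cv (fun n => rank_gap (Ys (phi n))) 0.
  exact: (cv_subseq (u := fun n => rank_gap (Ys n)) hphi hgap0).
have hgb : rank_gap Yb = 0.
  exact: (UL_sequence _ _ _ (rank_gap_cv (fun n => hpsd (phi n)) (proj1 hOb) hc) hsub).
by exists phi, Yb.
Qed.

Hypothesis hcalm : forall Y, Gamma Amap b 0 Y -> calm (Gamma Amap b) 0 Y.

Lemma error_bound : exists al, 0 < al /\ error_bound_with al.
Proof.
apply: Classical_Prop.NNPP => hn.
have [Ys hYs] := violating_seq_of_no_bound hn.
have [phi [Yb [hphi [hGb [hc hgap0]]]]] := violating_seq_limit hYs.
have [al [e1 [e2 [hal [he1 [he2 hcal]]]]]] := hcalm hGb.
have [N1 hN1] := eventually_le hgap0 he1.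
have [N2 hN2] := eventually_le (mcv_dist_cv0 hc) (Rmult_lt_0_compat _ _ he2 he2).
have [N3 hN3] := INR_archimed 1 al Rlt_0_1.
pose n := (N1 + N2 + N3)%nat.
set Y := Ys (phi n).
have hY0 : 0 <= rank_gap Y := rank_gap_nonneg (proj1 (proj1 (hYs (phi n)))).
have hx : Rabs (rank_gap Y - 0) <= e1.
  by rewrite Rminus_0_r Rabs_pos_eq //; apply: hN1; rewrite /n -addnA leq_addr.
have hfr : frob (madd Y (mopp Yb)) <= e2.
  apply: frob_le_of_inner; first lra.
  by apply: hN2; rewrite /n -addnA (addnC N2) addnA leq_addl.
have hGY : Gamma Amap b (rank_gap Y) Y by split => //; exact: (proj1 (hYs (phi n))).
have [Z [hZ hYZ]] := hcal _ _ hx hfr hGY.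
have hgrow : al <= INR (phi n) + 1.
  have : INR N3 <= INR (phi n).
    by apply: le_INR; apply/leP; apply: leq_trans (incr_ge hphi n); rewrite /n leq_addl.
  lra.
have := proj2 (hYs (phi n)) Z hZ; rewrite -/Y.
rewrite Rminus_0_r Rabs_pos_eq // in hYZ.
by have := Rmult_le_compat_r _ _ _ hY0 hgrow; lra.
Qed.

End ErrorBound.

Lemma is_argmin_iff_set q (S1 S2 : mat q -> Prop) f Y :
  (forall Z, S1 Z <-> S2 Z) -> (is_argmin S1 f Y <-> is_argmin S2 f Y).
Proof.
move=> h; split => [[h1 h2] | [h1 h2]]; split; try (by apply/h);
  by move=> Z /h; exact: h2.
Qed.

Section ExactPenalty.
Variable q : nat.
Variables (S : mat q -> Prop) (f p : mat q -> R) (dist : mat q -> mat q -> R).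
Variables (K al rho : R).
Hypothesis hK : 0 <= K.
Hypothesis hp : forall Y, S Y -> 0 <= p Y.
Hypothesis hlip : forall Y Z, f Z - f Y <= K * dist Y Z.
Hypothesis herr : forall Y, S Y -> exists Z, (S Z /\ p Z = 0) /\ dist Y Z <= al * p Y.
Hypothesis hrho : K * al < rho.

Lemma penalty_projection Y : S Y ->
  exists Z, (S Z /\ p Z = 0) /\ f Z <= f Y + K * al * p Y.
Proof.
move=> hY; have [Z [hZ hd]] := herr hY; exists Z; split => //.
have := hlip Y Z; have := Rmult_le_compat_l _ _ _ hK hd; lra.
Qed.

Lemma exact_penalty Ystar :
  is_argmin (fun Y => S Y /\ p Y = 0) f Ystar <->
  is_argmin S (fun Y => f Y + rho * p Y) Ystar.
Proof.
split.
- move=> [[hS hp0] hmin]; split => // Y hY.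
  have [Z [hZ hfZ]] := penalty_projection hY.
  have := hmin Z hZ; have := hp hY; rewrite hp0; nra.
- move=> [hS hmin].
  have [Z [[hZ hpZ] hfZ]] := penalty_projection hS.
  have hp0 : p Ystar = 0.
    have := hmin Z hZ; have := hp hS; rewrite hpZ; nra.
  split => // Y [hY hpY]; have := hmin Y hY; rewrite hp0 hpY; lra.
Qed.

End ExactPenalty.

Theorem proposition2 (q m : nat) (Cbar : mat q) (Amap : mat q -> vec m) (b : vec m)
  (hC : is_sym Cbar) (hA : linear_on_sym Amap)
  (hne : exists Y, Omega Amap b Y)
  (hbdd : exists M, forall Y, Omega Amap b Y -> frob Y <= M)
  (hR : exists Y, Omega Amap b Y /\ rank_le1 Y)
  (hcalm : forall Y, Gamma Amap b 0 Y -> calm (Gamma Amap b) 0 Y) :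
  exists rhobar, 0 < rhobar /\
    forall rho, rho > rhobar -> forall Ystar : mat q,
      is_argmin (fun Y => Omega Amap b Y /\ rank_le1 Y) (fun Y => inner Cbar Y) Ystar <->
      is_argmin (Omega Amap b)
        (fun Y => inner Cbar Y + rho * (nuclear_norm Y - spectral_norm Y)) Ystar.
Proof.
have [al [hal herr]] := error_bound hA hbdd hR hcalm.
have hK := abs_sum_nonneg Cbar.
exists (abs_sum Cbar * al + 1); split; first nra.
move=> rho hrho Ystar.
rewrite (@is_argmin_iff_set _ _ (fun Y => Omega Amap b Y /\ rank_gap Y = 0)); last first.
  by move=> Z; split => [] [hZ h]; split => //; apply/(rank_gap_zero_iff (proj1 hZ)).
apply: (@exact_penalty _ _ _ _ (fun Y Z => frob (madd Y (mopp Z))) (abs_sum Cbar) al).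
- exact: hK.
- by move=> Y hY; exact: rank_gap_nonneg (proj1 hY).
- exact: inner_lipschitz.
- exact: herr.
- lra.
Qed.
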